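(* Let $N,\alpha\in\mathbb{N}$ and let $a_1,\dots,a_\alpha$ be complex numbers. Define $a_{n,j}:=a_j$ if $n\le N$ and $j\le\alpha$, and $a_{n,j}:=0$ otherwise ($n,j\ge1$). Then $$(1+a_1+\cdots+a_\alpha)^N=1+\sum_{k=1}^{\alpha N}\ \sum_{L\vdash k}\frac{1}{C_{stb}(L)}\sum_{\sigma\in S_{\ell(L)}}\operatorname{sign}(\sigma)\,\mathbb{A}_{\sigma,L}\big(\{a_{n,j}\}_{n,j\ge1}\big).$$
   Context: $L\vdash k$ means $L=[x_1,\dots,x_m]$ is a partition of $k$ (multiset of positive integers summing to $k$), $\ell(L)=m$, and $C_{stb}(L):=\prod_x(\#\{i:x_i=x\})!$ over distinct values $x$ in $L$. Writing $L=[k_1,\dots,k_m]$ with $k_1\le\cdots\le k_m$ and, for $\sigma\in S_m$ (sign denoted $\operatorname{sign}$), decomposing $\sigma$ into disjoint cycles $C_1,\dots,C_r$ (fixed points kept as length-one cycles), $\mathbb{A}_{\sigma,L}(\{a_{n,j}\}):=\prod_{t=1}^{r}\big(\sum_{n=1}^{\infty}\prod_{i\in C_t}a_{n,k_i}\big)$ (finite sums here). *)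

From HB Require Import structures.
From mathcomp Require Import all_boot all_order all_algebra all_fingroup.
From mathcomp Require Import complex.
From mathcomp Require Import reals.
Set Implicit Arguments. Unset Strict Implicit. Unset Printing Implicit Defensive.
Import Order.TTheory GRing.Theory Num.Theory.
Local Open Scope ring_scope.

Definition is_partition (k : nat) (L : seq nat) : bool :=
  [&& sorted leq L, all (fun x => 0 < x)%N L & sumn L == k].

Definition Cstb (L : seq nat) : nat :=
  \prod_(x <- undup L) (count_mem x L)`!.

(* A_{sigma,L}({a_{n,j}}) = prod over cycles C of sigma (fixed points included)
   of sum_{n >= 1} prod_{i in C} a_{n,k_i}; the sum over n is taken over
   1 <= n <= M, where M is a bound beyond which a_{n,_} vanishes. *)
Definition Aop (C : nzRingType) (M : nat) (a : nat -> nat -> C) (m : nat)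
    (s : 'S_m) (L : m.-tuple nat) : C :=
  \prod_(c in porbits s) \sum_(1 <= n < M.+1) \prod_(i in c) a n (tnth L i).

Definition anj (C : nzRingType) (N alpha : nat) (a : nat -> C) (n j : nat) : C :=
  if [&& (1 <= n)%N, (n <= N)%N, (1 <= j)%N & (j <= alpha)%N] then a j else 0.

From HB Require Import structures.
From mathcomp Require Import all_boot all_order all_algebra all_fingroup.
From mathcomp Require Import complex.
From mathcomp Require Import reals.
From mathcomp Require Import ring.
Set Implicit Arguments. Unset Strict Implicit. Unset Printing Implicit Defensive.
Import Order.TTheory GRing.Theory Num.Theory.
Local Open Scope ring_scope.

(** Every cycle of [sigma] contributes the factor [N * prod_{i in C} a_{k_i}]
    to [A_{sigma,L}], so [A_{sigma,L} = N^c(sigma) * prod_i a_{k_i}], where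
    [c(sigma)] is the number of cycles.  Now [N^c(sigma)] counts the maps
    [f : [1,l] -> [1,N]] that are constant on the cycles of [sigma], and for a
    fixed [f] the signed sum over [sigma] of [prod_i [f i = f (sigma i)]] is the
    determinant of the 0/1 matrix [[f i = f j]], i.e. [1] if [f] is injective
    and [0] otherwise.  Hence [sum_sigma sign(sigma) A_{sigma,L}] is the
    falling factorial [N (N-1) ... (N-l+1)] times [prod_i a_{k_i}], and the
    term of [L] becomes [N!/((N-l)! prod_j m_j!) prod_j a_j^{m_j}], where [m_j]
    is the multiplicity of [j] in [L].  This is the coefficient given by the
    multinomial theorem for [(1 + a_1 + ... + a_alpha)^N], and partitions of
    [k] with parts at most [alpha] correspond bijectively to multiplicity
    vectors [(m_1, ..., m_alpha)] with [sum_j j m_j = k]. *)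

Lemma prodr_natb (R : comPzSemiRingType) (I : finType) (P : pred I) :
  \prod_(i : I) ((P i)%:R : R) = ([forall i, P i])%:R.
Proof.
have [/forallP P_all | /forallPn[i Pi]] := boolP [forall i, P i].
  by apply: big1 => i _; rewrite P_all.
by rewrite (bigD1 i) //= (negbTE Pi) mul0r.
Qed.

Lemma det_eq_mx (R : comNzRingType) (T : eqType) m (f : 'I_m -> T) :
  \det (\matrix_(i, j) ((f i == f j)%:R : R)) = (injectiveb f)%:R.
Proof.
have [/injectiveP f_inj | /injectivePn[x [y xy fxy]]] := boolP (injectiveb f).
  suff -> : \matrix_(i, j) ((f i == f j)%:R : R) = 1%:M by rewrite det1.
  by apply/matrixP => i j; rewrite !mxE (inj_eq f_inj).
by rewrite (determinant_alternate xy) // => j; rewrite !mxE fxy.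
Qed.

Section PermutationOrbits.

Variables (m : nat) (s : 'S_m).

Lemma porbit_invariant (T : Type) (f : 'I_m -> T) :
  (forall i, f (s i) = f i) -> forall x y, y \in porbit s x -> f y = f x.
Proof.
move=> fs x y /porbitP[i ->]; elim: i => [|i IH]; first by rewrite expg0 perm1.
by rewrite expgSr permM fs.
Qed.

Lemma card_porbit_invariant_ffun n :
  #|[set f : {ffun 'I_m -> 'I_n.+1} | [forall i, f (s i) == f i]]| =
  (n.+1 ^ #|porbits s|)%N.
Proof.
pose lift_orbits (g : {ffun {set 'I_m} -> 'I_n.+1}) := [ffun i => g (porbit s i)].
have -> : (n.+1 ^ #|porbits s|)%N = #|pffun_on ord0 (porbits s) (@predT 'I_n.+1)|.
  by rewrite card_pffun_on card_ord.
rewrite -(card_in_imset (f := lift_orbits)).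
- apply: eq_card => f; rewrite inE; apply/forallP/imsetP => [fs|[g _ ->] i].
  + exists [ffun c => if c \in porbits s then
                        if [pick x in c] is Some x then f x else ord0
                      else ord0].
      apply/pffun_onP; split=> //; apply/subsetP => c; rewrite inE ffunE.
      by case: ifP => // _; rewrite eqxx.
    apply/ffunP => i; rewrite !ffunE imset_f //=.
    case: pickP => [y yi | /(_ i)]; last by rewrite porbit_id.
    exact/esym/(porbit_invariant (fun j => eqP (fs j))).
  + by rewrite !ffunE; have := porbit_perm s 1 i; rewrite expg1 => ->.
- move=> g1 g2 g1_on g2_on /ffunP g12.
  apply/ffunP => c; have [/imsetP[x _ ->]|c_out] := boolP (c \in porbits s).
    by have := g12 x; rewrite !ffunE.
  have out_ord0 (g : {ffun {set 'I_m} -> 'I_n.+1}) :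
      g \in pffun_on ord0 (porbits s) predT -> g c = ord0.
    case/pffun_onP => g_on _; apply/eqP; apply: contraNT c_out => gc.
    by apply: (subsetP g_on); rewrite inE.
  by rewrite (out_ord0 _ g1_on) (out_ord0 _ g2_on).
Qed.

Variable R : comNzRingType.

Lemma natr_exp_card_porbits n :
  (n.+1)%:R ^+ #|porbits s| =
  \sum_(f : {ffun 'I_m -> 'I_n.+1}) \prod_i ((f i == f (s i))%:R : R).
Proof.
rewrite -natrX -card_porbit_invariant_ffun -sum1_card natr_sum big_mkcond /=.
apply: eq_bigr => f _; rewrite prodr_natb inE.
by under eq_forallb do rewrite eq_sym; case: [forall _, _].
Qed.

Lemma prod_porbits (F : 'I_m -> R) :
  \prod_(c in porbits s) \prod_(i in c) F i = \prod_i F i.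
Proof.
rewrite [RHS](partition_big (porbit s) (mem (porbits s))) /=; last first.
  by move=> i _; apply: imset_f.
apply: eq_bigr => c /imsetP[x _ ->]; apply: eq_bigl => i.
by rewrite eq_porbit_mem.
Qed.

End PermutationOrbits.

Lemma sum_sign_exp_card_porbits (R : comNzRingType) m n :
  \sum_(s : 'S_m) (-1) ^+ s * (n.+1)%:R ^+ #|porbits s| = (n.+1 ^_ m)%:R :> R.
Proof.
under eq_bigr do rewrite natr_exp_card_porbits mulr_sumr.
rewrite exchange_big /=.
have := card_inj_ffuns 'I_m 'I_n.+1; rewrite !card_ord => <-.
rewrite -sum1_card natr_sum [RHS]big_mkcond /=.
apply: eq_bigr => f _; rewrite inE.
transitivity (\det (\matrix_(i, j) ((f i == f j)%:R : R))).
  by apply: eq_bigr => s _; congr (_ * _); apply: eq_bigr => i _; rewrite mxE.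
by rewrite det_eq_mx; case: injectiveb.
Qed.

Definition trunc_coef (C : nzRingType) alpha (a : nat -> C) (j : nat) : C :=
  if (1 <= j <= alpha)%N then a j else 0.

Lemma Aop_anj (C : comNzRingType) N alpha (a : nat -> C) m (s : 'S_m)
    (L : m.-tuple nat) :
  Aop N (anj N alpha a) s L =
  N%:R ^+ #|porbits s| * \prod_(i < m) trunc_coef alpha a (tnth L i).
Proof.
have cycle_sum (c : {set 'I_m}) :
    \sum_(1 <= n < N.+1) \prod_(i in c) anj N alpha a n (tnth L i) =
    N%:R * \prod_(i in c) trunc_coef alpha a (tnth L i).
  rewrite mulr_natl -[in RHS](addnK 1 N) addn1 -sumr_const_nat.
  rewrite big_nat_cond [RHS]big_nat_cond.
  apply: eq_bigr => n /andP[/andP[n_gt0 n_le] _]; apply: eq_bigr => i _.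
  by rewrite /anj /trunc_coef n_gt0 -ltnS n_le.
rewrite /Aop; under eq_bigr do rewrite cycle_sum.
by rewrite big_split prodr_const prod_porbits.
Qed.

Lemma signed_sum_Aop_anj (C : comNzRingType) N alpha (a : nat -> C) m
    (L : m.-tuple nat) :
  \sum_(s : 'S_m) (-1) ^+ odd_perm s * Aop N.+1 (anj N.+1 alpha a) s L =
  (N.+1 ^_ m)%:R * \prod_(x <- L) trunc_coef alpha a x.
Proof.
rewrite (eq_bigr (fun s : 'S_m => (-1) ^+ odd_perm s * (N.+1)%:R ^+ #|porbits s| *
                                  \prod_(i < m) trunc_coef alpha a (tnth L i))).
  by rewrite -mulr_suml sum_sign_exp_card_porbits big_tuple.
by move=> s _; rewrite Aop_anj mulrA.
Qed.

(** [mu : n.-tuple 'I_N.+1] encodes the partition in which the part [j.+1]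
    occurs [mult mu j] times, for [j < n]. *)
Definition mult n N (mu : n.-tuple 'I_N.+1) (j : nat) : nat := nth 0%N (map val mu) j.

Definition nparts n N (mu : n.-tuple 'I_N.+1) : nat := (\sum_(j < n) mult mu j)%N.

Definition psum n N (mu : n.-tuple 'I_N.+1) : nat := (\sum_(j < n) mult mu j * j.+1)%N.

Definition multinomial_term (R : fieldType) N n (c : nat -> R) (x : R)
    (mu : n.-tuple 'I_N.+1) : R :=
  (N ^_ nparts mu)%:R / (\prod_(j < n) (mult mu j)`!)%:R * x ^+ (N - nparts mu) *
  \prod_(j < n) c j ^+ mult mu j.

Lemma mult_tnth n N (mu : n.-tuple 'I_N.+1) (j : 'I_n) : mult mu j = tnth mu j.
Proof. by rewrite /mult (nth_map ord0) ?size_tuple // -(tnth_nth ord0). Qed.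

Lemma ffactnD n p q : n ^_ (p + q) = (n ^_ p * (n - p) ^_ q)%N.
Proof.
elim: q => [|q IH]; first by rewrite addn0 ffactn0 muln1.
by rewrite addnS !ffactnSr IH subnDA mulnA.
Qed.

Lemma ffact_binomial (R : numFieldType) N p i (P : nat) (x : R) : (0 < P)%N ->
  (N ^_ (i + p))%:R / (i`! * P)%:R * x ^+ (N - (i + p)) =
  (N ^_ p)%:R / P%:R * (x ^+ (N - p - i) *+ 'C(N - p, i)).
Proof.
move=> P_gt0; rewrite addnC ffactnD subnDA.
have [i_le | i_gt] := leqP i (N - p); last first.
  by rewrite (ffact_small i_gt) (bin_small i_gt) muln0 !mul0r mulr0n mulr0.
rewrite -(bin_ffact (N - p) i) -mulr_natr !natrM.
have P_neq0 : (P%:R : R) != 0 by rewrite pnatr_eq0 -lt0n.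
have fact_neq0 : ((i`!)%:R : R) != 0 by rewrite pnatr_eq0 -lt0n fact_gt0.
by field; rewrite fact_neq0 P_neq0.
Qed.

Lemma sum_tuple_cons (V : nmodType) (T : finType) n (F : n.+1.-tuple T -> V) :
  \sum_(t : n.+1.-tuple T) F t = \sum_(x : T) \sum_(t : n.-tuple T) F [tuple of x :: t].
Proof.
rewrite pair_bigA (reindex (fun p : T * n.-tuple T => [tuple of p.1 :: p.2])) //=.
exists (fun t => (thead t, [tuple of behead t])) => [[x t] _ | t _] /=.
  by congr pair; apply: val_inj.
by rewrite -tuple_eta.
Qed.

Section MultCons.

Variables (n N : nat) (i : 'I_N.+1) (mu : n.-tuple 'I_N.+1).

Lemma nparts_cons : nparts [tuple of i :: mu] = (i + nparts mu)%N.
Proof. by rewrite /nparts big_ord_recl. Qed.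

Lemma prod_fact_mult_cons :
  (\prod_(j < n.+1) (mult [tuple of i :: mu] j)`!)%N =
  (i`! * \prod_(j < n) (mult mu j)`!)%N.
Proof. by rewrite big_ord_recl; congr (_ * _)%N; apply: eq_bigr => j _; rewrite lift0. Qed.

Lemma prod_exp_mult_cons (R : comNzRingType) (c : nat -> R) :
  \prod_(j < n.+1) c j ^+ mult [tuple of i :: mu] j =
  c 0%N ^+ i * \prod_(j < n) c j.+1 ^+ mult mu j.
Proof. by rewrite big_ord_recl; congr (_ * _); apply: eq_bigr => j _; rewrite lift0. Qed.

End MultCons.

Lemma multinomial_ffact (R : numFieldType) N n (c : nat -> R) (x : R) :
  (x + \sum_(j < n) c j) ^+ N =
  \sum_(mu : n.-tuple 'I_N.+1) multinomial_term c x mu.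
Proof.
elim: n c x => [|n IH] c x.
  rewrite big_ord0 addr0 (big_pred1 [tuple]) => [|t]; last first.
    by apply/esym/eqP; exact: tuple0.
  by rewrite /multinomial_term /nparts !big_ord0 ffactn0 subn0 invr1 !mulr1 mul1r.
rewrite big_ord_recl addrA; under eq_bigr do rewrite lift0.
rewrite (IH (fun j => c j.+1) (x + c 0%N)) sum_tuple_cons exchange_big /=.
apply: eq_bigr => mu _; rewrite /multinomial_term exprDn.
rewrite (big_ord_widen N.+1
  (fun i => x ^+ (N - nparts mu - i) * c 0%N ^+ i *+ 'C(N - nparts mu, i)));
  last by rewrite ltnS leq_subr.
rewrite mulr_sumr mulr_suml [LHS]big_mkcond; apply: eq_bigr => i _.
rewrite nparts_cons prod_fact_mult_cons prod_exp_mult_cons ffact_binomial; last first.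
  by rewrite prodn_gt0 // => j; rewrite fact_gt0.
rewrite ltnS; case: leqP => [_ | i_gt]; last by rewrite bin_small // !mulr0n !mulr0 !mul0r.
by rewrite -mulrnAl !mulrA.
Qed.

Lemma nparts_eq0 n N (mu : n.-tuple 'I_N.+1) :
  (nparts mu == 0%N) = (mu == [tuple ord0 | _ < n]).
Proof.
apply/eqP/eqP => [/eqP | ->]; last first.
  by rewrite /nparts big1 // => j _; rewrite mult_tnth tnth_mktuple.
rewrite /nparts sum_nat_eq0 => /forallP mult0; apply: eq_from_tnth => j.
by apply: val_inj; rewrite tnth_mktuple /= -mult_tnth; apply/eqP/mult0.
Qed.

Lemma multinomial_term_tuple_ord0 (R : fieldType) N n (c : nat -> R) (x : R) :
  multinomial_term c x [tuple (ord0 : 'I_N.+1) | _ < n] = x ^+ N.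
Proof.
have mult0 (j : 'I_n) : mult [tuple (ord0 : 'I_N.+1) | _ < n] j = 0%N.
  by rewrite mult_tnth tnth_mktuple.
rewrite /multinomial_term /nparts !big1 => [|j _|j _|j _]; rewrite ?mult0 //.
by rewrite ffactn0 subn0 divr1 mul1r mulr1.
Qed.

Lemma multinomial_ffact_one (R : numFieldType) N n (c : nat -> R) :
  (1 + \sum_(j < n) c j) ^+ N =
  1 + \sum_(mu : n.-tuple 'I_N.+1 | (0 < nparts mu <= N)%N) multinomial_term c 1 mu.
Proof.
rewrite multinomial_ffact (bigD1 [tuple ord0 | _ < n]) //=.
rewrite multinomial_term_tuple_ord0 expr1n; congr (1 + _).
rewrite big_mkcond [RHS]big_mkcond; apply: eq_bigr => mu _.
rewrite -nparts_eq0 lt0n; case: (nparts mu == 0%N) => //=.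
by case: leqP => // np_gt; rewrite /multinomial_term ffact_small // !mul0r.
Qed.

Definition partition_of_mult (g : nat -> nat) (n : nat) : seq nat :=
  flatten [seq nseq (g j) j.+1 | j <- index_iota 0 n].

Section PartitionOfMult.

Variables (g : nat -> nat) (n : nat).

Local Notation L := (partition_of_mult g n).

Lemma size_partition_of_mult : size L = (\sum_(j < n) g j)%N.
Proof.
rewrite size_flatten /shape -map_comp sumnE big_map big_mkord.
by apply: eq_bigr => j _; rewrite /= size_nseq.
Qed.

Lemma sumn_partition_of_mult : sumn L = (\sum_(j < n) g j * j.+1)%N.
Proof.
rewrite sumnE big_flatten big_map big_mkord.
by apply: eq_bigr => j _; rewrite big_nseq iter_addn_0 mulnC.
Qed.

Lemma prod_partition_of_mult (R : comPzSemiRingType) (F : nat -> R) :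
  \prod_(x <- L) F x = \prod_(j < n) F j.+1 ^+ g j.
Proof.
rewrite big_flatten big_map big_mkord.
by apply: eq_bigr => j _; rewrite big_nseq iter_mulr_1.
Qed.

Lemma mem_partition_of_mult x : x \in L -> (0 < x <= n)%N.
Proof.
case/flattenP => _ /mapP[j + ->] /nseqP[-> _].
by rewrite mem_index_iota.
Qed.

Lemma sorted_partition_of_mult : sorted leq L.
Proof.
rewrite /partition_of_mult /index_iota subn0; elim: n 0%N => [|i IH] j //=.
have /allP le_tail : all (leq j.+1) (flatten [seq nseq (g l) l.+1 | l <- iota j.+1 i]).
  apply/allP => x /flattenP[_ /mapP[l + ->] /nseqP[-> _]].
  by rewrite mem_iota => /andP[/ltnW].
elim: (g j) => //= c IHc; rewrite (path_sortedE leq_trans) IHc andbT all_cat.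
by apply/andP; split; [apply/allP => x /nseqP[->] | apply/allP].
Qed.

Lemma count_partition_of_mult j : (j < n)%N -> count_mem j.+1 L = g j.
Proof.
move=> j_lt; rewrite count_flatten -map_comp sumnE big_map.
rewrite (bigD1_seq j) ?mem_index_iota ?iota_uniq //= count_nseq /= eqxx mul1n.
by rewrite big1 ?addn0 // => l /negbTE lj; rewrite count_nseq /= eqSS lj.
Qed.

Lemma partition_of_mult_unique (P : seq nat) :
  sorted leq P -> all (fun x => 0 < x <= n)%N P ->
  (forall j, (j < n)%N -> g j = count_mem j.+1 P) -> L = P.
Proof.
move=> P_sorted /allP P_range gP.
apply: (sorted_eq leq_trans anti_leq sorted_partition_of_mult P_sorted).
apply/allP => x _; apply/eqP.
have [/andP[x_gt0 x_le] | x_out] := boolP (0 < x <= n)%N.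
  by rewrite -(prednK x_gt0) count_partition_of_mult -?gP // prednK.
rewrite (count_memPn (contra (@mem_partition_of_mult x) x_out)).
by apply/esym/count_memPn; apply: contra x_out; apply: P_range.
Qed.

Lemma Cstb_partition_of_mult : Cstb L = (\prod_(j < n) (g j)`!)%N.
Proof.
rewrite /Cstb; transitivity (\prod_(x <- index_iota 1 n.+1 | x \in L) (count_mem x L)`!)%N.
  rewrite -[RHS]big_filter; apply/perm_big/uniq_perm.
  - exact: undup_uniq.
  - by rewrite filter_uniq // iota_uniq.
  move=> x; rewrite mem_undup mem_filter mem_index_iota.
  by case xL: (x \in L); rewrite //= ltnS (mem_partition_of_mult xL).
rewrite big_mkcond /index_iota (iotaDl 1 0) big_map -/(index_iota 0 n) big_mkord.
apply: eq_bigr => j _; rewrite add1n count_partition_of_mult //.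
by case: ifP => // /negbT/count_memPn; rewrite count_partition_of_mult // => ->.
Qed.

End PartitionOfMult.

Lemma map_val_mktuple_inord k m (L : seq nat) :
  size L = m -> all (fun x => x <= k)%N L ->
  map val [tuple (inord (nth 0%N L i) : 'I_k.+1) | i < m] = L.
Proof.
move=> <- /allP L_le; apply: (@eq_from_nth _ 0%N); rewrite size_map size_tuple // => i i_lt.
rewrite (nth_map ord0) ?size_tuple //.
rewrite [in LHS](_ : i = Ordinal i_lt) // -tnth_nth tnth_mktuple.
by rewrite /= inordK // ltnS L_le // mem_nth.
Qed.

Section PartitionsAsMultiplicities.

Variables (N alpha k m : nat).
Hypothesis m_le : (m <= N)%N.

Definition tuple_of_mult (mu : alpha.-tuple 'I_N.+1) : m.-tuple 'I_k.+1 :=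
  [tuple inord (nth 0%N (partition_of_mult (mult mu) alpha) i) | i < m].

Definition mult_of_tuple (t : m.-tuple 'I_k.+1) : alpha.-tuple 'I_N.+1 :=
  [tuple inord (count_mem j.+1 (map val t)) | j < alpha].

Lemma map_val_tuple_of_mult mu : nparts mu = m -> psum mu = k ->
  map val (tuple_of_mult mu) = partition_of_mult (mult mu) alpha.
Proof.
move=> np_mu ps_mu; apply: map_val_mktuple_inord; first by rewrite size_partition_of_mult.
apply/allP => x x_in; rewrite -ps_mu /psum -sumn_partition_of_mult.
by rewrite (perm_sumn (perm_to_rem x_in)) leq_addr.
Qed.

Lemma mult_of_tupleE t j :
  (j < alpha)%N -> mult (mult_of_tuple t) j = count_mem j.+1 (map val t).
Proof.
move=> j_lt; rewrite (_ : j = Ordinal j_lt) // mult_tnth tnth_mktuple inordK //.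
by rewrite ltnS (leq_trans (count_size _ _)) // size_map size_tuple.
Qed.

Definition bounded_partition (t : m.-tuple 'I_k.+1) : bool :=
  is_partition k (map val t) && all (fun x => x <= alpha)%N (map val t).

Lemma partition_of_mult_of_tuple t : bounded_partition t ->
  partition_of_mult (mult (mult_of_tuple t)) alpha = map val t.
Proof.
case/andP => /and3P[t_sorted /allP t_pos _] /allP t_le.
apply: partition_of_mult_unique => // [|j j_lt]; last by rewrite mult_of_tupleE.
by apply/allP => x x_in; rewrite t_pos ?t_le.
Qed.

Lemma bounded_partition_tuple_of_multE mu :
  bounded_partition (tuple_of_mult mu) && (mult_of_tuple (tuple_of_mult mu) == mu) =
  (nparts mu == m) && (psum mu == k).
Proof.
apply/andP/andP => [[bp /eqP tK] | [/eqP np_mu /eqP ps_mu]].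
  have := partition_of_mult_of_tuple bp; rewrite tK => L_eq.
  case/andP: bp => /and3P[_ _ /eqP sum_k] _.
  rewrite /nparts /psum -size_partition_of_mult -sumn_partition_of_mult L_eq.
  by rewrite size_map size_tuple sum_k !eqxx.
have L_eq := map_val_tuple_of_mult np_mu ps_mu; split.
  rewrite /bounded_partition /is_partition L_eq sorted_partition_of_mult.
  rewrite sumn_partition_of_mult -/(psum mu) ps_mu eqxx andbT /=.
  by apply/andP; split; apply/allP => x /mem_partition_of_mult /andP[].
apply/eqP/eq_from_tnth => j.
by rewrite tnth_mktuple L_eq count_partition_of_mult // mult_tnth inord_val.
Qed.

Lemma sum_bounded_partitions (V : nmodType) (F : seq nat -> V) :
  \sum_(t : m.-tuple 'I_k.+1 | bounded_partition t) F (map val t) =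
  \sum_(mu : alpha.-tuple 'I_N.+1 | (nparts mu == m) && (psum mu == k))
    F (partition_of_mult (mult mu) alpha).
Proof.
rewrite (reindex_onto tuple_of_mult mult_of_tuple) => [|t t_part]; last first.
  apply: eq_from_tnth => i; rewrite tnth_mktuple partition_of_mult_of_tuple //.
  by rewrite (nth_map ord0) ?size_tuple // -tnth_nth inord_val.
apply: eq_big => [mu | mu]; first exact: bounded_partition_tuple_of_multE.
rewrite bounded_partition_tuple_of_multE => /andP[/eqP np_mu /eqP ps_mu].
by rewrite map_val_tuple_of_mult.
Qed.

End PartitionsAsMultiplicities.

Definition partition_weight (C : fieldType) N alpha (a : nat -> C) (L : seq nat) : C :=
  ((Cstb L)%:R)^-1 * ((N ^_ size L)%:R * \prod_(x <- L) trunc_coef alpha a x).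

Lemma partition_weight_eq0 (C : fieldType) N alpha (a : nat -> C) L :
  ~~ all (fun x => x <= alpha)%N L || (N < size L)%N -> partition_weight N alpha a L = 0.
Proof.
rewrite /partition_weight => /orP[/allPn[x x_in x_gt] | N_lt].
  by rewrite (big_rem x x_in) /= /trunc_coef (negbTE x_gt) andbF mul0r !mulr0.
by rewrite ffact_small // mul0r mulr0.
Qed.

Lemma partition_weight_of_mult (C : numFieldType) N alpha (a : nat -> C)
    (mu : alpha.-tuple 'I_N.+1) :
  partition_weight N alpha a (partition_of_mult (mult mu) alpha) =
  multinomial_term (fun j => a j.+1) 1 mu.
Proof.
rewrite /partition_weight Cstb_partition_of_mult size_partition_of_mult.
rewrite prod_partition_of_mult /multinomial_term expr1n mulr1 mulrCA mulrA.
by congr (_ * _); apply: eq_bigr => j _; rewrite /trunc_coef /= ltn_ord.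
Qed.

Lemma sum_partition_terms (C : numFieldType) N alpha (a : nat -> C) k m :
  \sum_(t : m.-tuple 'I_k.+1 | is_partition k (map val t))
     ((Cstb (map val t))%:R)^-1 *
     \sum_(s : 'S_m)
       (-1) ^+ odd_perm s * Aop N.+1 (anj N.+1 alpha a) s [tuple of map val t] =
  \sum_(mu : alpha.-tuple 'I_N.+2 | [&& nparts mu == m, psum mu == k & (m <= N.+1)%N])
     multinomial_term (fun j => a j.+1) 1 mu.
Proof.
transitivity (\sum_(t : m.-tuple 'I_k.+1 | is_partition k (map val t))
                partition_weight N.+1 alpha a (map val t)).
  apply: eq_bigr => t _; rewrite signed_sum_Aop_anj /partition_weight.
  by rewrite [in RHS]size_map [in RHS]size_tuple.
have [m_le | m_gt] := leqP m N.+1; last first.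
  rewrite big1 => [|t _]; last first.
    by rewrite partition_weight_eq0 // size_map size_tuple m_gt orbT.
  by rewrite big_pred0 // => mu; rewrite !andbF.
rewrite (bigID (fun t : m.-tuple 'I_k.+1 => all (fun x => x <= alpha)%N (map val t))) /=.
rewrite [X in _ + X]big1 ?addr0 => [|t /andP[_ t_gt]]; last first.
  by rewrite partition_weight_eq0 ?t_gt.
rewrite (sum_bounded_partitions _ _ m_le); apply: eq_big => [mu | mu _].
  by rewrite andbT.
exact: partition_weight_of_mult.
Qed.

Lemma nparts_le_psum n N (mu : n.-tuple 'I_N.+1) : (nparts mu <= psum mu)%N.
Proof. by apply: leq_sum => j _; apply: leq_pmulr. Qed.

Lemma psum_le n N (mu : n.-tuple 'I_N.+1) : (psum mu <= n * nparts mu)%N.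
Proof.
rewrite /psum /nparts big_distrr /=; apply: leq_sum => j _.
by rewrite mulnC leq_mul2r ltn_ord orbT.
Qed.

Lemma sum_by_psum_nparts (V : nmodType) alpha N (F : alpha.-tuple 'I_N.+1 -> V) :
  \sum_(mu | (0 < nparts mu <= N)%N) F mu =
  \sum_(1 <= k < (alpha * N).+1) \sum_(1 <= m < k.+1)
     \sum_(mu | [&& nparts mu == m, psum mu == k & (m <= N)%N]) F mu.
Proof.
have psum_lt (mu : alpha.-tuple 'I_N.+1) :
    (nparts mu <= N)%N -> (psum mu < (alpha * N).+1)%N.
  move=> np_le; rewrite ltnS (leq_trans (psum_le mu)) //.
  by rewrite leq_mul2l np_le orbT.
rewrite (partition_big (fun mu => inord (psum mu) : 'I_(alpha * N).+1) (fun k => 0 < k)%N);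
  last first.
  move=> mu /andP[np_gt0 np_le]; rewrite inordK ?psum_lt //.
  exact: leq_trans np_gt0 (nparts_le_psum mu).
rewrite big_geq_mkord; apply: eq_bigr => k k_gt0.
rewrite (partition_big (fun mu => inord (nparts mu) : 'I_k.+1) (fun m => 0 < m)%N);
  last first.
  move=> mu /andP[/andP[np_gt0 np_le] /eqP ps_k].
  have k_eq : k = psum mu :> nat by rewrite -ps_k inordK ?psum_lt.
  by rewrite inordK // ltnS k_eq nparts_le_psum.
rewrite big_geq_mkord; apply: eq_bigr => m m_gt0; apply: eq_bigl => mu.
apply/idP/idP => [/andP[/andP[/andP[np_gt0 np_le] /eqP ps_k] /eqP np_m] | ].
  have k_eq : k = psum mu :> nat by rewrite -ps_k inordK ?psum_lt.
  have m_eq : m = nparts mu :> nat by rewrite -np_m inordK // ltnS k_eq nparts_le_psum.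
  by rewrite m_eq k_eq !eqxx np_le.
case/and3P => /eqP np_m /eqP ps_k m_le.
by rewrite np_m ps_k m_gt0 m_le !inord_val !eqxx.
Qed.

Unset Implicit Arguments.
Local Open Scope complex_scope.

Theorem mainTheorem4 (R : realType) (N alpha : nat) (a : nat -> R[i]) :
  (1 + \sum_(1 <= j < alpha.+1) a j) ^+ N =
  1 + \sum_(1 <= k < (alpha * N).+1)
        \sum_(1 <= m < k.+1)
          \sum_(t : m.-tuple 'I_k.+1 | is_partition k (map val t))
            ((Cstb (map val t))%:R)^-1 *
            \sum_(s : 'S_m)
              (-1) ^+ odd_perm s *
              Aop N (anj N alpha a) s [tuple of map val t].
Proof.
case: N => [|N]; first by rewrite expr0 muln0 big_geq // addr0.
rewrite big_add1 /= big_mkord (multinomial_ffact_one N.+1 alpha (fun j => a j.+1)).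
rewrite sum_by_psum_nparts.
congr (1 + _); apply: eq_bigr => k _; apply: eq_bigr => m _.
by rewrite sum_partition_terms.
Qed.
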